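(* There is an absolute constant $C$ such that the following holds for all positive integers $n$. Let $w=\lfloor0.4n\rfloor$, and let integers $i\ne j$ and $k=i+j$ satisfy $|i|,|j|\le2w$ and $|k|\le w$. Then $R_i\cup R_j\cup L_k$ Schur embeds into $\{1,3,4\}\times\{0,1,\dots,\lfloor0.15n\rfloor+C\}$.
   Context: $R=\{(x,y)\in\mathbb{R}^2:0.7n\le x+y\le n,\ |x-y|\le0.8n\}$, $L=\{(x,y)\in\mathbb{R}^2:2\lceil0.7n\rceil\le x+y\le1.7n,\ |x-y|\le0.4n\}$. Fibers: $R_j=\{(x,y)\in\mathbb{Z}^2\cap R:x-y=j\}$ for $|j|\le 2w$ and $L_k=\{(x,y)\in\mathbb{Z}^2\cap L:x-y=k\}$ for $|k|\le w$. A set $X_1\subset\mathbb{Z}^2$ Schur embeds into $X_2\subset\mathbb{Z}^2$ if there is an injection $f:X_1\to X_2$ such that for all $a,b,c\in X_1$, $a+b=c$ if and only if $f(a)+f(b)=f(c)$ (coordinatewise addition). *)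

From mathcomp Require Import all_boot all_order all_algebra.
Set Implicit Arguments. Unset Strict Implicit. Unset Printing Implicit Defensive.
Import Order.TTheory GRing.Theory Num.Theory.
Local Open Scope ring_scope.

Definition pt := (int * int)%type.
Definition addpt (a b : pt) : pt := (a.1 + b.1, a.2 + b.2).

(* Real (here exact rational) constraints, with n%:Q the integer n. *)
Definition Q (z : int) : rat := z%:~R.

Definition inR (n : nat) (p : pt) : Prop :=
  (7/10) * n%:R <= Q (p.1 + p.2) /\ Q (p.1 + p.2) <= n%:R /\
  Q `|p.1 - p.2| <= (8/10) * n%:R.

Definition inL (n : nat) (p : pt) : Prop :=
  2 * Num.ceil ((7/10 : rat) * n%:R) <= p.1 + p.2 /\
  Q (p.1 + p.2) <= (17/10) * n%:R /\
  Q `|p.1 - p.2| <= (4/10) * n%:R.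

Definition Rfib (n : nat) (j : int) (p : pt) : Prop := inR n p /\ p.1 - p.2 = j.
Definition Lfib (n : nat) (k : int) (p : pt) : Prop := inL n p /\ p.1 - p.2 = k.

Definition wpar (n : nat) : int := Num.floor ((4/10 : rat) * n%:R).

Definition schur_embeds (X1 X2 : pt -> Prop) : Prop :=
  exists f : pt -> pt,
    (forall a, X1 a -> X2 (f a)) /\
    (forall a b, X1 a -> X1 b -> f a = f b -> a = b) /\
    (forall a b c, X1 a -> X1 b -> X1 c ->
       (addpt a b = c <-> addpt (f a) (f b) = f c)).

Definition target (n C : nat) (p : pt) : Prop :=
  (p.1 = 1 \/ p.1 = 3 \/ p.1 = 4) /\
  0 <= p.2 <= Num.floor ((15/100 : rat) * n%:R) + C%:Z.

From mathcomp Require Import all_boot all_order all_algebra zify.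
Import Order.TTheory GRing.Theory Num.Theory.
Local Open Scope ring_scope.

(* Send R_i, R_j and L_{i+j} to the columns 1, 3 and 4 of the target, each
   translated along its own line x - y = const.  Among the columns, 1 + 3 = 4
   is the only sum that is again a column.  The same holds in the source:
   points of R have x + y in [0.7n, n] and points of L have x + y in
   [1.4n, 1.7n], so a sum inside the union adds two points of R and lands in
   L, and since x - y is additive and i <> j it lands in L_{i+j} exactly when
   the summands come from different fibers.  Each fiber has about 0.15n
   points, which is the height of the target. *)

Section RatioComparisons.
Variable R : numFieldType.
Variables (c d n : nat) (z : int).
Hypothesis d_gt0 : (0 < d)%N.

Lemma ler_ratio_int :
  ((c%:R / d%:R) * n%:R <= z%:~R :> R) = ((c * n)%:Z <= d%:Z * z).
Proof.
by rewrite mulrAC ler_pdivrMr ?ltr0n // -natrM mulrC !pmulrn -intrM ler_int.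
Qed.

Lemma ltr_ratio_int :
  ((c%:R / d%:R) * n%:R < z%:~R :> R) = ((c * n)%:Z < d%:Z * z).
Proof.
by rewrite mulrAC ltr_pdivrMr ?ltr0n // -natrM mulrC !pmulrn -intrM ltr_int.
Qed.

Lemma ler_int_ratio :
  (z%:~R <= (c%:R / d%:R) * n%:R :> R) = (d%:Z * z <= (c * n)%:Z).
Proof.
by rewrite mulrAC ler_pdivlMr ?ltr0n // -natrM mulrC !pmulrn -intrM ler_int.
Qed.

Lemma ltr_int_ratio :
  (z%:~R < (c%:R / d%:R) * n%:R :> R) = (d%:Z * z < (c * n)%:Z).
Proof.
by rewrite mulrAC ltr_pdivlMr ?ltr0n // -natrM mulrC !pmulrn -intrM ltr_int.
Qed.

End RatioComparisons.

Lemma ceil_ratio_bounds (R : archiRealFieldType) (c d n : nat) : (0 < d)%N ->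
  let m := Num.ceil ((c%:R / d%:R : R) * n%:R) in
  (c * n)%:Z <= d%:Z * m /\ d%:Z * (m - 1) < (c * n)%:Z.
Proof.
move=> d_gt0 m; have /andP[lt_pred le_m] := ceil_itv ((c%:R / d%:R : R) * n%:R).
by rewrite -(ler_ratio_int R) // -(ltr_int_ratio R).
Qed.

Lemma floor_ratio_bounds (R : archiRealFieldType) (c d n : nat) : (0 < d)%N ->
  let m := Num.floor ((c%:R / d%:R : R) * n%:R) in
  d%:Z * m <= (c * n)%:Z /\ (c * n)%:Z < d%:Z * (m + 1).
Proof.
move=> d_gt0 m; have /andP[le_m lt_succ] := floor_itv ((c%:R / d%:R : R) * n%:R).
by rewrite -(ler_int_ratio R) // -(ltr_ratio_int R).
Qed.

Lemma Rfib_bounds n i p : Rfib n i p ->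
  [/\ (7 * n)%:Z <= 10%:Z * (p.1 + p.2), p.1 + p.2 <= n%:Z & p.1 - p.2 = i].
Proof.
case=> -[lb [ub _]] diff; split=> //; first by move: lb; rewrite /Q ler_ratio_int.
by move: ub; rewrite /Q pmulrn ler_int.
Qed.

Lemma Lfib_bounds n k p : Lfib n k p ->
  [/\ 2 * Num.ceil ((7/10 : rat) * n%:R) <= p.1 + p.2,
      10%:Z * (p.1 + p.2) <= (17 * n)%:Z & p.1 - p.2 = k].
Proof. by case=> -[lb [ub _]] diff; split=> //; move: ub; rewrite /Q ler_int_ratio. Qed.

Lemma pair_eqE (a b c d : int) : ((a, b) = (c, d) :> pt) <-> a = c /\ b = d.
Proof. by split=> [[-> ->]|[-> ->]]. Qed.

Lemma schur_embeds_sub (X Y Z : pt -> Prop) :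
  (forall p, X p -> Y p) -> schur_embeds Y Z -> schur_embeds X Z.
Proof.
move=> subXY [f [fYZ [f_inj f_add]]]; exists f; split; first by move=> p /subXY /fYZ.
split; first by move=> p q /subXY Yp /subXY Yq; exact: f_inj.
by move=> p q r /subXY Yp /subXY Yq /subXY Yr; exact: f_add.
Qed.

Section ColumnEmbedding.
Variables (n : nat) (i j : int).
Hypotheses (n_gt0 : (0 < n)%N) (neq_ij : i != j).

Let sum_min : int := Num.ceil ((7/10 : rat) * n%:R).

Let sum_min_bounds : (7 * n)%:Z <= 10%:Z * sum_min /\ 10%:Z * (sum_min - 1) < (7 * n)%:Z.
Proof. exact: ceil_ratio_bounds. Qed.

Definition fiber_union (p : pt) : Prop :=
  [\/ [/\ (7 * n)%:Z <= 10%:Z * (p.1 + p.2), p.1 + p.2 <= n%:Z & p.1 - p.2 = i],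
      [/\ (7 * n)%:Z <= 10%:Z * (p.1 + p.2), p.1 + p.2 <= n%:Z & p.1 - p.2 = j] |
      [/\ 2 * sum_min <= p.1 + p.2, 10%:Z * (p.1 + p.2) <= (17 * n)%:Z &
          p.1 - p.2 = i + j]].

(* Up to rounding, [shift_i] and [shift_j] are the least x-coordinates on R_i
   and R_j, and their sum is the least x-coordinate on L_{i+j}; this makes the
   translations compatible with addition. *)
Definition shift_i : int := ((sum_min + i) %/ 2)%Z.
Definition shift_j : int := ((sum_min + j) %/ 2)%Z.

Definition column_map (p : pt) : pt :=
  if p.1 + p.2 <= n%:Z then
    if p.1 - p.2 == i then (1, p.1 - shift_i) else (3, p.1 - shift_j)
  else (4, p.1 - shift_i - shift_j).

Lemma shift_bounds :
  [/\ 2 * shift_i <= sum_min + i, sum_min + i - 1 <= 2 * shift_i,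
      2 * shift_j <= sum_min + j & sum_min + j - 1 <= 2 * shift_j].
Proof. rewrite /shift_i /shift_j; split; lia. Qed.

Lemma column_mapE p : fiber_union p ->
  [\/ [/\ (7 * n)%:Z <= 10%:Z * (p.1 + p.2), p.1 + p.2 <= n%:Z, p.1 - p.2 = i &
          column_map p = (1, p.1 - shift_i)],
      [/\ (7 * n)%:Z <= 10%:Z * (p.1 + p.2), p.1 + p.2 <= n%:Z, p.1 - p.2 = j &
          column_map p = (3, p.1 - shift_j)] |
      [/\ 2 * sum_min <= p.1 + p.2, 10%:Z * (p.1 + p.2) <= (17 * n)%:Z,
          p.1 - p.2 = i + j & column_map p = (4, p.1 - shift_i - shift_j)]].
Proof.
rewrite /column_map; case=> -[lb ub diff].
- by apply: Or31; rewrite ub diff eqxx.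
- by apply: Or32; rewrite ub diff eq_sym (negbTE neq_ij).
- apply: Or33; split=> //; case: sum_min_bounds => ? _.
  by have -> : (p.1 + p.2 <= n%:Z) = false by apply/negbTE; rewrite -ltNge; lia.
Qed.

Lemma column_map_target p : fiber_union p -> target n 2 (column_map p).
Proof.
have top_lb : (15 * n)%:Z < 100%:Z * (Num.floor ((15/100 : rat) * n%:R) + 1).
  by case: (floor_ratio_bounds rat 15 100 n isT).
have [? ? ? ?] := shift_bounds; case: sum_min_bounds => ? ?.
by case/column_mapE=> -[lb ub diff ->]; split=> /=; try tauto; apply/andP; split; lia.
Qed.

Lemma column_map_inj p q : fiber_union p -> fiber_union q ->
  column_map p = column_map q -> p = q.
Proof.
case: p q => [x1 y1] [x2 y2] /column_mapE Hp /column_mapE Hq.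
by case: Hp => -[/= ? ? ? ->]; case: Hq => -[/= ? ? ? ->];
  move/pair_eqE=> [? ?]; apply/pair_eqE; lia.
Qed.

Lemma column_map_add p q r :
  fiber_union p -> fiber_union q -> fiber_union r ->
  addpt p q = r <-> addpt (column_map p) (column_map q) = column_map r.
Proof.
case: p q r => [x1 y1] [x2 y2] [x3 y3] /column_mapE Hp /column_mapE Hq /column_mapE Hr.
rewrite /addpt /=.
by case: Hp => -[/= ? ? ? ->]; case: Hq => -[/= ? ? ? ->];
  case: Hr => -[/= ? ? ? ->]; rewrite /= !pair_eqE; split=> -[? ?]; lia.
Qed.

Lemma fiber_union_schur_embeds : schur_embeds fiber_union (target n 2).
Proof.
exists column_map; split; first exact: column_map_target.
by split; [exact: column_map_inj | exact: column_map_add].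
Qed.

End ColumnEmbedding.

Theorem mainTheorem8 :
  exists C : nat, forall n : nat, (0 < n)%N ->
    forall i j : int, i != j ->
    `|i| <= 2 * wpar n -> `|j| <= 2 * wpar n -> `|i + j| <= wpar n ->
    schur_embeds
      (fun p => Rfib n i p \/ Rfib n j p \/ Lfib n (i + j) p)
      (target n C).
Proof.
exists 2%N => n n_gt0 i j neq_ij _ _ _.
apply: schur_embeds_sub (@fiber_union_schur_embeds n i j n_gt0 neq_ij).
by move=> p [/Rfib_bounds|[/Rfib_bounds|/Lfib_bounds]] ?;
  [apply: Or31 | apply: Or32 | apply: Or33].
Qed.
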